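(* Let $A$ be $K\{X\}_\infty$ or $K\{X\}$, regarded as the unitary commutative algebra $(A,\sqcup\!\sqcup)$ with augmentation ideal $\bar A=\bigoplus_{n\ge1}A^{(n)}$, and let $\nabla_2:A\to A\otimes A$ be defined by $\langle\vee^2(f_1,f_2),g\rangle=\langle f_1\otimes f_2,\nabla_2(g)\rangle$ for all $f_1,f_2\in A$. Then: (i) $\nabla_2$ is a morphism of commutative algebras $(A,\sqcup\!\sqcup)\to(A\otimes A,\sqcup\!\sqcup\otimes\sqcup\!\sqcup)$; (ii) $\nabla_2$ is not coassociative, and for a nonempty monomial $T$ with root $\rho$, $\nabla_2(T)=T\otimes1+1\otimes T+T^1\otimes T^2$ if $T=\vee^2(T^1,T^2)$, and $\nabla_2(T)=T\otimes1+1\otimes T$ if $\rho$ has arity different from $2$; (iii) with $\nabla'_2(f):=\nabla_2(f)-f\otimes1-1\otimes f$, one has $\nabla'_2(f)\in\bar A\otimes\bar A$ for all $f\in\bar A$. In other words, $(A,\sqcup\!\sqcup)$ with $\nabla_2$ and the augmentation as counit is a co-unital-magma object in the category of commutative algebras.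
   Context: $K$ is a field of characteristic $0$, $X=\{x_1,x_2,\dots\}$ a finite or countable set of variables. A planar rooted tree is reduced if no vertex has exactly one incoming edge. $K\{X\}_\infty$ has basis the monomials: the empty tree $1$ and all planar reduced rooted trees with leaves labelled by elements of $X$, graded by number of leaves ($A^{(n)}$); for $k\ge2$, $\vee^k$ grafts $k$ nonempty trees (in order) onto a new root, extended multilinearly, with unit conventions (arguments $1$ omitted, so $\vee^2(1,a)=\vee^2(a,1)=a$, $\vee^k(1,\dots,1)=1$). $K\{X\}$ is the span of $1$ and the binary monomials. $A\otimes A$ carries the operations componentwise, and the co-addition $\Delta_a$ is the unique unital homomorphism with $\Delta_a(x_i)=x_i\otimes1+1\otimes x_i$. $\langle\,,\rangle$ is the bilinear form on $A$ making monomials orthonormal, extended factorwise to tensor products; $\sqcup\!\sqcup$ is defined by $\langle g_1\sqcup\!\sqcup g_2,h\rangle=\langle g_1\otimes g_2,\Delta_a(h)\rangle$ for all $h\in A$; $A\otimes A$ is a commutative algebra with the componentwise product $(a\otimes b)(a'\otimes b')=(a\sqcup\!\sqcup a')\otimes(b\sqcup\!\sqcup b')$. *)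

From HB Require Import structures.
From mathcomp Require Import all_boot all_algebra.
Set Implicit Arguments. Unset Strict Implicit. Unset Printing Implicit Defensive.
Import GRing.Theory.
Local Open Scope ring_scope.

Section Trees.
Variable X : countType.

(* Planar rooted trees with leaves labelled by X: GenTree.Leaf x is a leaf,
   GenTree.Node 0 ts an internal vertex whose ordered children are ts. *)
Definition tree := GenTree.tree X.
(* Monomials: None is the empty tree 1, Some t a nonempty tree. *)
Definition Mon : Type := option tree.

(* Reduced trees (every internal vertex has >= 2 children, node tag 0);
   if [bin] then every internal vertex has exactly 2 children. *)
Fixpoint wft (bin : bool) (t : tree) : bool :=
  match t with
  | GenTree.Leaf _ => true
  | GenTree.Node n ts =>
      [&& n == 0%N, (if bin then size ts == 2%N else (1 < size ts)%N)
        & all (wft bin) ts]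
  end.

(* admissible monomials: bin = false for K{X}_oo, bin = true for K{X} *)
Definition wfm (bin : bool) (m : Mon) : bool :=
  if m is Some t then wft bin t else true.

(* vee^k on monomials with the unit conventions: arguments 1 are omitted,
   vee of no argument is 1, vee of a single argument is that argument. *)
Definition veek (ms : seq Mon) : Mon :=
  match pmap id ms with
  | [::] => None
  | [:: t] => Some t
  | ts => Some (GenTree.Node 0 ts)
  end.

Definition vee2m (a b : Mon) : Mon := veek [:: a; b].

Fixpoint choices (A : Type) (ls : seq (seq A)) : seq (seq A) :=
  match ls with
  | [::] => [:: [::]]
  | l :: ls' => [seq x :: c | x <- l, c <- choices ls']
  end.

(* Co-addition Delta_a on a monomial, as a formal sum (list with
   multiplicities) of pure tensors of monomials: the unital homomorphism
   with Delta_a(x) = x(x)1 + 1(x)x, where vee^k acts componentwise on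
   A(x)A and is extended multilinearly. *)
Fixpoint delta (t : tree) : seq (Mon * Mon) :=
  match t with
  | GenTree.Leaf x => [:: (Some (GenTree.Leaf x), None); (None, Some (GenTree.Leaf x))]
  | GenTree.Node _ ts =>
      [seq (veek (map fst c), veek (map snd c)) | c <- choices (map delta ts)]
  end.

Definition deltaM (m : Mon) : seq (Mon * Mon) :=
  if m is Some t then delta t else [:: (None, None)].
End Trees.

Section Algebra.
Variables (K : fieldType) (X : countType).

(* Elements of A, A(x)A, A(x)A(x)A are coefficient functions on monomials
   (resp. pairs, triples of monomials); the coefficient of a monomial T in f
   is <f, T> for the form making monomials orthonormal. *)
Definition elA := Mon X -> K.
Definition elA2 := (Mon X * Mon X) -> K.
Definition elA3 := (Mon X * Mon X * Mon X) -> K.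

Definition inA (bin : bool) (f : elA) : Prop :=
  (exists s : seq (Mon X), forall m, m \notin s -> f m = 0) /\
  (forall m, f m != 0 -> wfm bin m).

Definition inA2 (bin : bool) (F : elA2) : Prop :=
  (exists s : seq (Mon X * Mon X), forall p, p \notin s -> F p = 0) /\
  (forall p, F p != 0 -> wfm bin p.1 && wfm bin p.2).

Definition mono (T : Mon X) : elA := fun m => (m == T)%:R.
Definition oneA : elA := mono None.
Definition oneA2 : elA2 := fun p => ((p.1 == None) && (p.2 == None))%:R.

Definition tens (f g : elA) : elA2 := fun p => f p.1 * g p.2.

(* shuffle product of A: <g1 sh g2, h> = <g1 (x) g2, Delta_a(h)> for all
   monomials h of A (coefficients outside A are 0) *)
Definition shuffle (bin : bool) (g1 g2 : elA) : elA :=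
  fun h => if wfm bin h then \sum_(p <- deltaM h) g1 p.1 * g2 p.2 else 0.

(* componentwise product on A(x)A: (a(x)b)(a'(x)b') = (a sh a')(x)(b sh b') *)
Definition mul2 (bin : bool) (F G : elA2) : elA2 :=
  fun h => if wfm bin h.1 && wfm bin h.2 then
             \sum_(p <- deltaM h.1) \sum_(q <- deltaM h.2)
               F (p.1, q.1) * G (p.2, q.2)
           else 0.

(* nabla_2 : <vee^2(T1,T2), g> = <T1 (x) T2, nabla_2 g> for monomials T1, T2 *)
Definition nabla2 (g : elA) : elA2 := fun p => g (vee2m p.1 p.2).

Definition nabla2' (f : elA) : elA2 :=
  fun p => nabla2 f p - tens f oneA p - tens oneA f p.

(* phi (x) id and id (x) phi for a linear phi : A -> A(x)A *)
Definition tens_l (phi : elA -> elA2) (F : elA2) : elA3 :=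
  fun t => phi (fun m => F (m, t.2)) t.1.
Definition tens_r (phi : elA -> elA2) (F : elA2) : elA3 :=
  fun t => phi (fun m => F (t.1.1, m)) (t.1.2, t.2).
End Algebra.

From mathcomp Require Import all_boot all_algebra.
From Stdlib Require Import FunctionalExtensionality.
Set Implicit Arguments. Unset Strict Implicit. Unset Printing Implicit Defensive.
Import GRing.Theory.
Local Open Scope ring_scope.

(* By its defining duality, nabla_2 g is g composed with the grafting map
   (T1, T2) |-> vee^2(T1, T2) on pairs of monomials.  Hence nabla_2 of a
   monomial T is the indicator of the preimage of T, namely (T, 1), (1, T),
   and (T1, T2) when T = vee^2(T1, T2); and since vee^2(1, m) = vee^2(m, 1) = m,
   nabla_2 f - f(x)1 - 1(x)f vanishes on 1(x)A and A(x)1 as soon as f has no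
   constant term.  Multiplicativity is dual to
   Delta_a being a homomorphism for vee^2, i.e.
   Delta_a(vee^2(a, b)) = vee^2(Delta_a a, Delta_a b) computed componentwise.
   Non-coassociativity is witnessed by T = vee^2(vee^2(x, x), x): the two
   iterated coproducts of T differ on x(x)x(x)x, which grafts to T on one
   side and to vee^2(x, vee^2(x, x)) on the other. *)

Section Grafting.
Variable X : countType.

Lemma vee2m0l (m : Mon X) : vee2m None m = m.
Proof. by case: m. Qed.

Lemma vee2m0r (m : Mon X) : vee2m m None = m.
Proof. by case: m. Qed.

Lemma vee2m_Some (a b : tree X) :
  vee2m (Some a) (Some b) = Some (GenTree.Node 0 [:: a; b]).
Proof. by []. Qed.

Lemma wfm_vee2m bin (a b : Mon X) :
  wfm bin (vee2m a b) = wfm bin a && wfm bin b.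
Proof. by case: a b => [a|] [b|] //=; rewrite ?andbT //; case: bin. Qed.

Definition vee2m_preim (m : Mon X) : seq (Mon X * Mon X) :=
  match m with
  | None => [:: (None, None)]
  | Some t => (Some t, None) :: (None, Some t) ::
      match t with
      | GenTree.Node 0 [:: a; b] => [:: (Some a, Some b)]
      | _ => [::]
      end
  end.

Lemma mem_vee2m_preim (p : Mon X * Mon X) : p \in vee2m_preim (vee2m p.1 p.2).
Proof. by case: p => [[a|] [b|]]; rewrite /= ?inE ?eqxx ?orbT. Qed.

Lemma big_deltaM_vee2m (R : Type) (idx : R) (op : Monoid.com_law idx)
    (a b : Mon X) (F : Mon X * Mon X -> R) :
  \big[op/idx]_(p <- deltaM (vee2m a b)) F p =
  \big[op/idx]_(p <- deltaM a) \big[op/idx]_(q <- deltaM b)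
     F (vee2m p.1 q.1, vee2m p.2 q.2).
Proof.
case: a => [a|]; last first.
  by rewrite vee2m0l big_seq1; apply: eq_bigr => -[q1 q2] _; rewrite !vee2m0l.
case: b => [b|]; last first.
  by rewrite vee2m0r; apply: eq_bigr => -[p1 p2] _; rewrite big_seq1 !vee2m0r.
rewrite vee2m_Some [deltaM _]/= big_map (big_allpairs_dep (h := cons)).
apply: eq_bigr => p _; rewrite big_flatten /= big_map.
by apply: eq_bigr => q _; rewrite !big_seq1.
Qed.

End Grafting.

Section Monomials.
Variables (K : fieldType) (X : countType).

Lemma mono_self (T : Mon X) : mono K T T = 1.
Proof. by rewrite /mono eqxx. Qed.

Lemma mono_other (T m : Mon X) : m != T -> mono K T m = 0.
Proof. by rewrite /mono => /negPf->. Qed.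

Lemma mono_neq0 (T m : Mon X) : mono K T m != 0 -> m = T.
Proof. by apply: contra_neq_eq => /mono_other. Qed.

Lemma mono_node2 (a b c d : tree X) :
  mono K (Some (GenTree.Node 0 [:: c; d])) (Some (GenTree.Node 0 [:: a; b]))
  = mono K (Some c) (Some a) * mono K (Some d) (Some b).
Proof.
rewrite /mono -natrM mulnb; congr (nat_of_bool _)%:R.
by apply/eqP/andP => [[-> ->]|[/eqP[->] /eqP[->]]].
Qed.

End Monomials.

Section Nabla2.
Variables (K : fieldType) (X : countType) (bin : bool).
Implicit Types (f g : elA K X) (T : tree X).

Lemma inA2_nabla2 f : inA bin f -> inA2 bin (nabla2 f).
Proof.
move=> [[s f_supp] f_wf]; split; last by move=> p /f_wf; rewrite wfm_vee2m.
exists (flatten [seq vee2m_preim m | m <- s]) => p p_out.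
apply: f_supp; move: p_out; apply: contra => p_in; apply/flatten_mapP.
by exists (vee2m p.1 p.2); last exact: mem_vee2m_preim.
Qed.

Lemma nabla2_oneA : nabla2 (@oneA K X) = @oneA2 K X.
Proof. by apply: functional_extensionality => -[[a|] [b|]]. Qed.

Lemma nabla2_shuffle f g :
  nabla2 (shuffle bin f g) = mul2 bin (nabla2 f) (nabla2 g).
Proof.
apply: functional_extensionality => -[a b].
rewrite /nabla2 /shuffle /mul2 /= wfm_vee2m; case: ifP => // _.
exact: (big_deltaM_vee2m +%R).
Qed.

Let mono_simpl :=
  (vee2m0l, vee2m0r, vee2m_Some, mono_self, mulr0, mul0r, mulr1, mul1r,
   addr0, add0r).

Lemma nabla2_mono_node2 T1 T2 (T := GenTree.Node 0 [:: T1; T2]) :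
  nabla2 (mono K (Some T)) =
  (fun p => tens (mono K (Some T)) (@oneA K X) p
            + tens (@oneA K X) (mono K (Some T)) p
            + tens (mono K (Some T1)) (mono K (Some T2)) p).
Proof.
apply: functional_extensionality => -[[a|] [b|]];
  rewrite /nabla2 /tens /oneA /= ?mono_simpl
    ?[mono _ None (Some _)]mono_other ?[mono _ (Some _) None]mono_other
    ?mono_simpl //.
exact: mono_node2.
Qed.

Lemma nabla2_mono_primitive T :
  match T with GenTree.Leaf _ => true | GenTree.Node _ ts => size ts != 2%N end ->
  nabla2 (mono K (Some T)) =
  (fun p => tens (mono K (Some T)) (@oneA K X) p
            + tens (@oneA K X) (mono K (Some T)) p).
Proof.
move=> not_binary; apply: functional_extensionality => -[[a|] [b|]];
  rewrite /nabla2 /tens /oneA /= ?mono_simpl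
    ?[mono _ None (Some _)]mono_other ?[mono _ (Some _) None]mono_other
    ?mono_simpl //.
by apply: mono_other; move: not_binary; apply: contraTneq => -[<-].
Qed.

Lemma nabla2_not_coassociative (x : X) : exists f, inA bin f /\
  tens_l (@nabla2 K X) (nabla2 f) <> tens_r (@nabla2 K X) (nabla2 f).
Proof.
pose L := @GenTree.Leaf X x.
pose T := GenTree.Node 0 [:: GenTree.Node 0 [:: L; L]; L].
exists (mono K (Some T)); split.
  split; first by exists [:: Some T] => m; rewrite inE => /mono_other.
  by move=> m /mono_neq0 ->; case: bin.
move/(congr1 (fun F => F (Some L, Some L, Some L))).
rewrite /tens_l /tens_r /nabla2 /= mono_self mono_other //.
exact/eqP/oner_neq0.
Qed.

Lemma nabla2'_unit_l f m : f None = 0 -> nabla2' f (None, m) = 0.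
Proof.
move=> f0; rewrite /nabla2' /nabla2 /tens /oneA /= vee2m0l f0 mono_self.
by rewrite mul0r mul1r subr0 subrr.
Qed.

Lemma nabla2'_unit_r f m : f None = 0 -> nabla2' f (m, None) = 0.
Proof.
move=> f0; rewrite /nabla2' /nabla2 /tens /oneA /= vee2m0r f0 mono_self.
by rewrite !mulr0 mulr1 subrr subr0.
Qed.

End Nabla2.

Theorem lemma4p7p3 (K : fieldType) (charK0 : [pchar K] =i pred0)
  (X : countType) (x0 : X) (bin : bool) :
  (* (i) nabla_2 is a morphism of unital commutative algebras A -> A(x)A *)
  ((forall f : elA K X, inA bin f -> inA2 bin (nabla2 f)) /\
   (forall (c : K) (f g : elA K X), inA bin f -> inA bin g ->
      nabla2 (fun m => c * f m + g m) = (fun p => c * nabla2 f p + nabla2 g p)) /\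
   nabla2 (@oneA K X) = @oneA2 K X /\
   (forall f g : elA K X, inA bin f -> inA bin g ->
      nabla2 (shuffle bin f g) = mul2 bin (nabla2 f) (nabla2 g))) /\
  (* (ii) nabla_2 is not coassociative, and its values on monomials *)
  ((exists f : elA K X, inA bin f /\
      tens_l (@nabla2 K X) (nabla2 f) <> tens_r (@nabla2 K X) (nabla2 f)) /\
   (forall T : tree X, wft bin T ->
      (forall T1 T2 : tree X, T = GenTree.Node 0 [:: T1; T2] ->
         nabla2 (@mono K X (Some T)) =
           (fun p => tens (@mono K X (Some T)) (@oneA K X) p
                     + tens (@oneA K X) (@mono K X (Some T)) p
                     + tens (@mono K X (Some T1)) (@mono K X (Some T2)) p)) /\
      ((match T with GenTree.Leaf _ => true
                   | GenTree.Node _ ts => size ts != 2%N end) ->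
         nabla2 (@mono K X (Some T)) =
           (fun p => tens (@mono K X (Some T)) (@oneA K X) p
                     + tens (@oneA K X) (@mono K X (Some T)) p)))) /\
  (* (iii) nabla_2' maps the augmentation ideal into Abar (x) Abar *)
  (forall f : elA K X, inA bin f -> f None = 0 ->
     forall m1 m2 : Mon X, m1 = None \/ m2 = None -> nabla2' f (m1, m2) = 0).
Proof.
split; [split; [|split; [|split]]|split; [split|]].
- exact: inA2_nabla2.
- by [].
- exact: nabla2_oneA.
- by move=> f g _ _; apply: nabla2_shuffle.
- exact: nabla2_not_coassociative.
- move=> T _; split=> [T1 T2 ->|]; first exact: nabla2_mono_node2.
  exact: nabla2_mono_primitive.
- move=> f _ f0 m1 m2 [->|->]; [exact: nabla2'_unit_l | exact: nabla2'_unit_r].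
Qed.
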